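(* For any graph $F$ on $y\ge1$ vertices with average degree $d$ and any real $\lambda>0$, \[ \frac{\lambda Z_F'(\lambda)}{Z_F(\lambda)}\ \ge\ \frac{\lambda}{1+\lambda}\,y\,(1+\lambda)^{-d}, \qquad \log Z_F(\lambda)\ \ge\ \begin{cases} y\log(1+\lambda) & \text{if } d=0,\\[2pt] \dfrac{y}{d}\bigl(1-(1+\lambda)^{-d}\bigr) & \text{if } d>0.\end{cases} \]
   Context: $\log$ is the natural logarithm. For a graph $F$, $Z_F(\lambda)=\sum_{I}\lambda^{|I|}$ where the sum is over all independent sets $I$ of $F$ (including $\varnothing$), and $Z_F'$ is its derivative in $\lambda$. The average degree of $F$ is $2|E(F)|/|V(F)|$. *)

From Stdlib Require Import Reals Lra Lia Arith List Bool.
Import ListNotations.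
Open Scope R_scope.

(* A finite simple graph F on the vertex set {0,...,y-1} is given by
   y : nat and a symmetric irreflexive adjacency relation adj : nat -> nat -> bool
   (only its restriction to vertices < y matters).
   Subsets of {0,...,y-1} are encoded by bitmasks m < 2^y: i is in the
   subset iff Nat.testbit m i = true. *)

Definition inset (m i : nat) : bool := Nat.testbit m i.

Definition indep (adj : nat -> nat -> bool) (y m : nat) : bool :=
  forallb (fun i => forallb (fun j => negb (adj i j && inset m i && inset m j))
                            (seq 0 y)) (seq 0 y).

Definition card (y m : nat) : nat := length (filter (inset m) (seq 0 y)).

Definition ZF (adj : nat -> nat -> bool) (y : nat) (lam : R) : R :=
  fold_right Rplus 0
    (map (fun m => if indep adj y m then lam ^ card y m else 0) (seq 0 (2 ^ y))).

Definition ZFprime (adj : nat -> nat -> bool) (y : nat) (lam : R) : R :=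
  fold_right Rplus 0
    (map (fun m => if indep adj y m
                   then INR (card y m) * lam ^ (pred (card y m)) else 0)
         (seq 0 (2 ^ y))).

Definition nedges (adj : nat -> nat -> bool) (y : nat) : nat :=
  length (filter (fun p => adj (fst p) (snd p))
            (flat_map (fun i => map (fun j => (i, j)) (seq 0 i)) (seq 0 y))).

Definition avgdeg (adj : nat -> nat -> bool) (y : nat) : R :=
  2 * INR (nedges adj y) / INR y.

(* Let I be a random independent set with Pr(I) proportional to lam^|I|.  Then
   lam Z'/Z = E|I| = sum_v Pr(v in I), and adding v to the independent sets of
   F - N[v] shows Pr(v in I) = lam Z_{F-N[v]} / Z.  Deleting a single vertex divides
   the partition function by at most 1 + lam, so Z <= (1+lam)^(deg v + 1) Z_{F-N[v]}
   and Pr(v in I) >= lam/(1+lam) (1+lam)^(-deg v).  Convexity of x |-> (1+lam)^(-x)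
   turns the sum over v into y lam/(1+lam) (1+lam)^(-d).  The bounds on log Z follow
   by integrating (log Z)' = Z'/Z from 0, where Z = 1. *)

From Stdlib Require Import Reals Lra Lia List Bool Permutation.
From Coquelicot Require Import Coquelicot.
Import ListNotations.
Open Scope R_scope.

Definition sumR (f : nat -> R) (l : list nat) : R := fold_right Rplus 0 (map f l).

Lemma sumR_app f l1 l2 : sumR f (l1 ++ l2) = sumR f l1 + sumR f l2.
Proof. induction l1 as [|a l IH]; unfold sumR in *; simpl; [lra|]. rewrite IH; lra. Qed.

Lemma sumR_plus f g l : sumR (fun x => f x + g x) l = sumR f l + sumR g l.
Proof. induction l as [|a l IH]; unfold sumR in *; simpl; [lra|]. rewrite IH; lra. Qed.

Lemma sumR_scal c f l : sumR (fun x => c * f x) l = c * sumR f l.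
Proof. induction l as [|a l IH]; unfold sumR in *; simpl; [lra|]. rewrite IH; lra. Qed.

Lemma sumR_const c l : sumR (fun _ => c) l = c * INR (length l).
Proof.
  induction l as [|a l IH]; unfold sumR in *; simpl length; [simpl; lra|].
  rewrite S_INR; simpl; rewrite IH; lra.
Qed.

Lemma sumR_ext f g l : (forall x, In x l -> f x = g x) -> sumR f l = sumR g l.
Proof.
  intros H; unfold sumR; f_equal; apply map_ext_in; exact H.
Qed.

Lemma sumR_le f g l : (forall x, In x l -> f x <= g x) -> sumR f l <= sumR g l.
Proof.
  induction l as [|a l IH]; intros H; unfold sumR in *; simpl; [lra|].
  apply Rplus_le_compat; [apply H; left; reflexivity|].
  apply IH; intros x Hx; apply H; right; exact Hx.
Qed.

Lemma sumR_nonneg f l : (forall x, In x l -> 0 <= f x) -> 0 <= sumR f l.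
Proof.
  intros H; replace 0 with (sumR (fun _ => 0) l) by (rewrite sumR_const; ring).
  apply sumR_le; exact H.
Qed.

Lemma sumR_perm f l l' : Permutation l l' -> sumR f l = sumR f l'.
Proof. induction 1; unfold sumR in *; simpl; lra. Qed.

Lemma sumR_swap (F : nat -> nat -> R) l1 l2 :
  sumR (fun a => sumR (fun b => F a b) l2) l1 =
  sumR (fun b => sumR (fun a => F a b) l1) l2.
Proof.
  induction l1 as [|a l1 IH].
  - change (0 = sumR (fun b => sumR (fun a => F a b) []) l2).
    rewrite (sumR_ext _ (fun _ => 0) l2) by reflexivity.
    rewrite sumR_const; ring.
  - unfold sumR at 1; simpl; fold (sumR (fun a => sumR (fun b => F a b) l2) l1).
    rewrite IH, <- sumR_plus; reflexivity.
Qed.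

Lemma sumR_indicator (p : nat -> bool) l :
  INR (length (filter p l)) = sumR (fun v => if p v then 1 else 0) l.
Proof.
  induction l as [|a l IH]; simpl; [reflexivity|].
  unfold sumR; simpl; fold (sumR (fun v => if p v then 1 else 0) l); rewrite <- IH.
  destruct (p a); simpl length; [rewrite S_INR|]; lra.
Qed.

Lemma sumR_exp_ge f l : (0 < length l)%nat ->
  INR (length l) * exp (sumR f l / INR (length l)) <= sumR (fun v => exp (f v)) l.
Proof.
  intros Hl; set (n := INR (length l)); set (mu := sumR f l / n).
  assert (Hn : 0 < n) by (apply lt_0_INR; exact Hl).
  assert (Htan : forall x, exp mu * ((1 - mu) + x) <= exp x).
  { intros x; replace (exp x) with (exp mu * exp (x - mu)) by (rewrite <- exp_plus; f_equal; ring).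
    apply Rmult_le_compat_l; [left; apply exp_pos|].
    pose proof (exp_ineq1_le (x - mu)); lra. }
  apply Rle_trans with (sumR (fun v => exp mu * ((1 - mu) + f v)) l).
  - rewrite sumR_scal, sumR_plus, sumR_const; fold n.
    replace (sumR f l) with (mu * n) by (unfold mu; field; lra). lra.
  - apply sumR_le; intros v _; apply Htan.
Qed.

Definition toggle (u m : nat) : nat := Nat.lxor m (2 ^ u).

Lemma inset_toggle u m i :
  inset (toggle u m) i = if (u =? i)%nat then negb (inset m i) else inset m i.
Proof.
  unfold inset, toggle; rewrite Nat.lxor_spec, Nat.pow2_bits_eqb.
  destruct (u =? i)%nat, (Nat.testbit m i); reflexivity.
Qed.

Lemma toggle_involutive u m : toggle u (toggle u m) = m.
Proof. unfold toggle; rewrite Nat.lxor_assoc, Nat.lxor_nilpotent, Nat.lxor_0_r; reflexivity. Qed.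

Lemma toggle_lt_pow2 y u m : (u < y)%nat -> (m < 2 ^ y)%nat -> (toggle u m < 2 ^ y)%nat.
Proof.
  intros Hu Hm.
  assert (E : toggle u m = toggle u m mod 2 ^ y).
  { apply Nat.bits_inj; intros i; destruct (Nat.lt_ge_cases i y).
    - rewrite Nat.mod_pow2_bits_low; auto.
    - rewrite Nat.mod_pow2_bits_high by auto; unfold toggle; rewrite Nat.lxor_spec.
      rewrite <- (Nat.mod_small m (2 ^ y)) by auto.
      rewrite Nat.mod_pow2_bits_high, Nat.pow2_bits_false by lia; reflexivity. }
  rewrite E; apply Nat.mod_upper_bound, Nat.pow_nonzero; lia.
Qed.

Lemma sumR_toggle y u f : (u < y)%nat ->
  sumR (fun m => f (toggle u m)) (seq 0 (2 ^ y)) = sumR f (seq 0 (2 ^ y)).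
Proof.
  intros Hu; unfold sumR; rewrite <- map_map; fold (sumR f (map (toggle u) (seq 0 (2 ^ y)))).
  apply sumR_perm, NoDup_Permutation; [| apply seq_NoDup |].
  - apply FinFun.Injective_map_NoDup; [|apply seq_NoDup].
    intros a b H; rewrite <- (toggle_involutive u a), H; apply toggle_involutive.
  - intros x; rewrite in_map_iff, in_seq; split.
    + intros [z [<- Hz]]; apply in_seq in Hz; split; [lia|]; apply toggle_lt_pow2; lia.
    + intros Hx; exists (toggle u x); rewrite toggle_involutive; split; [reflexivity|].
      apply in_seq; split; [lia|]; apply toggle_lt_pow2; lia.
Qed.

Lemma length_filter_extend (f g : nat -> bool) u l :
  NoDup l -> In u l -> f u = false -> g u = true -> (forall x, x <> u -> g x = f x) ->
  length (filter g l) = S (length (filter f l)).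
Proof.
  induction l as [|a l IH]; intros Hnd Hin Hf Hg Hfg; [destruct Hin|].
  inversion Hnd; subst; simpl; destruct Hin as [<-|Hin].
  - rewrite Hf, Hg; simpl; do 2 f_equal; apply filter_ext_in.
    intros x Hx; apply Hfg; intros ->; contradiction.
  - rewrite Hfg by (intros ->; contradiction); destruct (f a); simpl; auto.
Qed.

Lemma card_toggle y u m : (u < y)%nat -> inset m u = false ->
  card y (toggle u m) = S (card y m).
Proof.
  intros Hu Hm; apply length_filter_extend with (u := u).
  - apply seq_NoDup.
  - apply in_seq; lia.
  - exact Hm.
  - rewrite inset_toggle, Nat.eqb_refl, Hm; reflexivity.
  - intros x Hx; rewrite inset_toggle; destruct (Nat.eqb_spec u x); congruence.
Qed.

Lemma indep_spec adj y m : indep adj y m = true <->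
  forall i j, (i < y)%nat -> (j < y)%nat -> adj i j && inset m i && inset m j = false.
Proof.
  unfold indep; rewrite forallb_forall; split.
  - intros H i j Hi Hj.
    specialize (H i (proj2 (in_seq _ _ _) (conj (Nat.le_0_l _) Hi))).
    rewrite forallb_forall in H.
    apply negb_true_iff, H, in_seq; lia.
  - intros H i Hi; rewrite forallb_forall; intros j Hj; apply in_seq in Hi, Hj.
    apply negb_true_iff, H; lia.
Qed.

Lemma indep_subset adj y m m' : (forall i, inset m i = true -> inset m' i = true) ->
  indep adj y m' = true -> indep adj y m = true.
Proof.
  rewrite !indep_spec; intros Hs H i j Hi Hj; specialize (H i j Hi Hj).
  destruct (adj i j), (inset m i) eqn:Ei, (inset m j) eqn:Ej; simpl in *; auto.
  rewrite (Hs i Ei), (Hs j Ej) in H; discriminate.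
Qed.

Lemma inset_toggle_of_inset u m i : inset m u = false ->
  inset m i = true -> inset (toggle u m) i = true.
Proof.
  intros Hu Hi; rewrite inset_toggle; destruct (Nat.eqb_spec u i); subst; congruence.
Qed.

Definition avoids (S : list nat) (m : nat) : bool := forallb (fun i => negb (inset m i)) S.

Lemma avoids_spec S m : avoids S m = true <-> forall i, In i S -> inset m i = false.
Proof.
  unfold avoids; rewrite forallb_forall.
  split; intros H i Hi; apply negb_true_iff; auto.
Qed.

Lemma avoids_subset S m m' : (forall i, inset m i = true -> inset m' i = true) ->
  avoids S m' = true -> avoids S m = true.
Proof.
  rewrite !avoids_spec; intros Hs H i Hi; specialize (H i Hi).
  destruct (inset m i) eqn:E; [rewrite (Hs i E) in H|]; auto.
Qed.

(* The summand of Z_{F - S}, the partition function of F with the vertices of S deleted. *)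
Definition wavoid adj y (S : list nat) t m : R :=
  if indep adj y m && avoids S m then t ^ card y m else 0.

Definition Zavoid adj y S t : R := sumR (wavoid adj y S t) (seq 0 (2 ^ y)).

Lemma wavoid_nonneg adj y S t m : 0 <= t -> 0 <= wavoid adj y S t m.
Proof. intros Ht; unfold wavoid; destruct (_ && _); [apply pow_le|]; lra. Qed.

Lemma Zavoid_nil adj y t : Zavoid adj y [] t = ZF adj y t.
Proof.
  unfold Zavoid, ZF, sumR, wavoid; f_equal; apply map_ext; intros m.
  rewrite andb_true_r; reflexivity.
Qed.

Lemma wavoid_toggle_le adj y S u t m : (u < y)%nat -> 0 <= t -> inset m u = false ->
  wavoid adj y S t (toggle u m) <= t * wavoid adj y S t m.
Proof.
  intros Hu Ht Hm; unfold wavoid.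
  destruct (indep adj y (toggle u m) && avoids S (toggle u m)) eqn:E.
  - apply andb_true_iff in E as [Ei Ea].
    pose proof (fun i => inset_toggle_of_inset u m i Hm) as Hsub.
    rewrite (indep_subset _ _ _ _ Hsub Ei), (avoids_subset _ _ _ Hsub Ea).
    rewrite card_toggle by assumption; simpl; lra.
  - apply Rmult_le_pos; [exact Ht|]; apply (wavoid_nonneg adj y S t m Ht).
Qed.

(* Split the independent sets by whether they contain u; those that do lose u by a toggle. *)
Lemma Zavoid_cons_le adj y S u t : (u < y)%nat -> 0 <= t ->
  Zavoid adj y S t <= (1 + t) * Zavoid adj y (u :: S) t.
Proof.
  intros Hu Ht; unfold Zavoid.
  set (w := wavoid adj y S t); set (w' := wavoid adj y (u :: S) t).
  assert (Hw' : forall m, w' m = if inset m u then 0 else w m).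
  { intros m; unfold w, w', wavoid; simpl avoids; destruct (inset m u); simpl;
      [rewrite andb_false_r|]; reflexivity. }
  rewrite (sumR_ext w (fun m => (if inset m u then 0 else w m) + (if inset m u then w m else 0)))
    by (intros m _; destruct (inset m u); ring).
  rewrite sumR_plus, <- (sumR_toggle y u (fun m => if inset m u then w m else 0)) by exact Hu.
  rewrite Rmult_plus_distr_r, Rmult_1_l, <- sumR_scal.
  apply Rplus_le_compat; apply sumR_le; intros m _; rewrite Hw'; [lra|].
  rewrite inset_toggle, Nat.eqb_refl.
  destruct (inset m u) eqn:Em; simpl; [lra|].
  apply wavoid_toggle_le; assumption.
Qed.

Lemma ZF_le_pow_Zavoid adj y S t : (forall u, In u S -> (u < y)%nat) -> 0 <= t ->
  ZF adj y t <= (1 + t) ^ length S * Zavoid adj y S t.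
Proof.
  intros HS Ht; induction S as [|u S IH]; simpl.
  - rewrite Zavoid_nil; lra.
  - apply Rle_trans with (1 := IH (fun v Hv => HS v (or_intror Hv))).
    rewrite (Rmult_comm (1 + t)), Rmult_assoc; apply Rmult_le_compat_l; [apply pow_le; lra|].
    apply Zavoid_cons_le; [apply HS; left|]; auto.
Qed.

Lemma derivable_pt_lim_sumR (g : nat -> R -> R) (g' : nat -> R) l x :
  (forall m, derivable_pt_lim (g m) x (g' m)) ->
  derivable_pt_lim (fun t => sumR (fun m => g m t) l) x (sumR g' l).
Proof.
  intros H; induction l as [|a l IH]; unfold sumR in *; simpl.
  - apply derivable_pt_lim_const.
  - apply (derivable_pt_lim_plus (g a) (fun t => fold_right Rplus 0 (map (fun m => g m t) l)));
      auto.
Qed.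

Lemma ZF_derivable adj y x : derivable_pt_lim (ZF adj y) x (ZFprime adj y x).
Proof.
  apply (derivable_pt_lim_sumR (fun m t => if indep adj y m then t ^ card y m else 0)).
  intros m; destruct (indep adj y m).
  - apply derivable_pt_lim_pow.
  - apply derivable_pt_lim_const.
Qed.

Lemma ZF_ge_1 adj y t : 0 <= t -> 1 <= ZF adj y t.
Proof.
  intros Ht; rewrite <- Zavoid_nil; unfold Zavoid.
  replace (seq 0 (2 ^ y)) with (0%nat :: seq 1 (2 ^ y - 1))
    by (pose proof (Nat.pow_nonzero 2 y ltac:(lia)); destruct (2 ^ y)%nat; [lia|];
        simpl; rewrite Nat.sub_0_r; reflexivity).
  assert (Hempty : wavoid adj y [] t 0 = 1).
  { assert (I0 : forall i, inset 0 i = false) by (intros; apply Nat.bits_0).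
    assert (Hi : indep adj y 0 = true)
      by (apply indep_spec; intros; rewrite !I0, andb_false_r; reflexivity).
    assert (Hc : card y 0 = 0%nat)
      by (unfold card; rewrite (filter_ext _ (fun _ => false)) by apply I0;
          induction (seq 0 y); auto).
    unfold wavoid; rewrite Hi, Hc; reflexivity. }
  unfold sumR; simpl; fold (sumR (wavoid adj y [] t) (seq 1 (2 ^ y - 1))).
  pose proof (sumR_nonneg (wavoid adj y [] t) (seq 1 (2 ^ y - 1))
                (fun m _ => wavoid_nonneg adj y [] t m Ht)); lra.
Qed.

Definition nbhd (adj : nat -> nat -> bool) y v : list nat := filter (adj v) (seq 0 y).

Definition deg (adj : nat -> nat -> bool) y v : nat := length (nbhd adj y v).

Lemma Zavoid_closed_nbhd_ge adj y v t : (v < y)%nat -> 0 <= t ->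
  ZF adj y t / (1 + t) * Rpower (1 + t) (- INR (deg adj y v))
    <= Zavoid adj y (v :: nbhd adj y v) t.
Proof.
  intros Hv Ht.
  assert (H := ZF_le_pow_Zavoid adj y (v :: nbhd adj y v) t).
  simpl length in H; fold (deg adj y v) in H; simpl pow in H.
  set (p := (1 + t) ^ deg adj y v) in *.
  assert (Hp : 0 < p) by (apply pow_lt; lra).
  rewrite Rpower_Ropp, Rpower_pow by lra; fold p.
  apply Rmult_le_reg_l with ((1 + t) * p); [apply Rmult_lt_0_compat; lra|].
  replace ((1 + t) * p * (ZF adj y t / (1 + t) * / p)) with (ZF adj y t) by (field; lra).
  apply H; [|exact Ht].
  intros u [<-|Hu]; [exact Hv|]; apply filter_In in Hu as [Hu _]; apply in_seq in Hu; lia.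
Qed.

Section SimpleGraph.

Variable adj : nat -> nat -> bool.
Hypothesis adj_sym : forall i j, adj i j = adj j i.
Hypothesis adj_irrefl : forall i, adj i i = false.

Lemma indep_toggle_of_avoids y v m : (v < y)%nat -> indep adj y m = true ->
  avoids (v :: nbhd adj y v) m = true -> indep adj y (toggle v m) = true.
Proof.
  intros Hv Hi Ha; rewrite indep_spec in *; rewrite avoids_spec in Ha.
  assert (Hnb : forall j, (j < y)%nat -> adj v j = true -> inset m j = false).
  { intros j Hj Hvj; apply Ha; right; apply filter_In; split; [apply in_seq; lia|exact Hvj]. }
  intros i j Hi' Hj'; rewrite !inset_toggle.
  destruct (Nat.eqb_spec v i), (Nat.eqb_spec v j); subst.
  - rewrite adj_irrefl; reflexivity.
  - destruct (adj i j) eqn:E; [rewrite (Hnb j); [rewrite andb_false_r| |]|]; auto.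
  - rewrite adj_sym; destruct (adj j i) eqn:E; [rewrite (Hnb i)|]; auto.
  - apply Hi; assumption.
Qed.

Lemma lam_ZFprime y t : t * ZFprime adj y t =
  sumR (fun v => sumR (fun m => if indep adj y m && inset m v then t ^ card y m else 0)
                      (seq 0 (2 ^ y))) (seq 0 y).
Proof.
  rewrite sumR_swap; unfold ZFprime; fold (sumR (fun m => if indep adj y m
    then INR (card y m) * t ^ pred (card y m) else 0) (seq 0 (2 ^ y))).
  rewrite <- sumR_scal; apply sumR_ext; intros m _; destruct (indep adj y m); simpl.
  - replace (t * (INR (card y m) * t ^ pred (card y m))) with (INR (card y m) * t ^ card y m)
      by (destruct (card y m); simpl; ring).
    change (INR (card y m)) with (INR (length (filter (inset m) (seq 0 y)))).
    rewrite sumR_indicator, Rmult_comm, <- sumR_scal.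
    apply sumR_ext; intros v _; destruct (inset m v); ring.
  - rewrite sumR_const; ring.
Qed.

(* [t * Zavoid (N[v])] counts, via toggling v, the independent sets containing v. *)
Lemma sum_Zavoid_closed_nbhd_le y t : 0 <= t ->
  t * sumR (fun v => Zavoid adj y (v :: nbhd adj y v) t) (seq 0 y) <= t * ZFprime adj y t.
Proof.
  intros Ht; rewrite lam_ZFprime, <- sumR_scal; apply sumR_le; intros v Hv.
  apply in_seq in Hv; rewrite <- (sumR_toggle y v) by lia.
  unfold Zavoid; rewrite <- sumR_scal; apply sumR_le; intros m _; unfold wavoid.
  destruct (indep adj y m && avoids (v :: nbhd adj y v) m) eqn:E.
  - apply andb_true_iff in E as [Ei Ea].
    assert (Hmv : inset m v = false) by (apply avoids_spec with (1 := Ea); left; reflexivity).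
    rewrite (indep_toggle_of_avoids y v m) by (auto; lia).
    rewrite inset_toggle, Nat.eqb_refl, Hmv, card_toggle by (auto; lia); simpl; lra.
  - rewrite Rmult_0_r; destruct (indep adj y (toggle v m) && inset (toggle v m) v);
      [apply pow_le|]; lra.
Qed.

Lemma deg_S n v : deg adj (S n) v = (deg adj n v + if adj v n then 1 else 0)%nat.
Proof.
  unfold deg, nbhd; rewrite seq_S, filter_app, length_app; simpl.
  destruct (adj v n); reflexivity.
Qed.

Lemma nedges_S n : nedges adj (S n) = (nedges adj n + deg adj n n)%nat.
Proof.
  unfold nedges, deg, nbhd; rewrite seq_S, flat_map_app, filter_app, length_app; simpl.
  rewrite app_nil_r, filter_map_swap, length_map; reflexivity.
Qed.

Lemma sum_deg n : sumR (fun v => INR (deg adj n v)) (seq 0 n) = 2 * INR (nedges adj n).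
Proof.
  induction n as [|n IH]; [unfold sumR; simpl; ring|].
  rewrite seq_S, sumR_app, (sumR_ext _ (fun v => INR (deg adj n v) + if adj v n then 1 else 0))
    by (intros v _; rewrite deg_S, plus_INR; destruct (adj v n); reflexivity).
  rewrite sumR_plus, IH, <- sumR_indicator, (filter_ext _ (adj n)) by (intros; apply adj_sym).
  fold (nbhd adj n n) (deg adj n n).
  unfold sumR; simpl; rewrite deg_S, adj_irrefl, nedges_S, !plus_INR; simpl; ring.
Qed.

Lemma sum_Rpower_deg_ge y a : (1 <= y)%nat ->
  INR y * Rpower a (- avgdeg adj y) <= sumR (fun v => Rpower a (- INR (deg adj y v))) (seq 0 y).
Proof.
  intros Hy.
  pose proof (sumR_exp_ge (fun v => - INR (deg adj y v) * ln a) (seq 0 y)) as H.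
  rewrite length_seq in H; unfold Rpower; apply Rle_trans with (2 := H ltac:(lia)).
  rewrite (sumR_ext _ (fun v => - ln a * INR (deg adj y v))) by (intros; ring).
  rewrite sumR_scal, sum_deg.
  assert (INR y <> 0) by (apply not_0_INR; lia).
  unfold avgdeg; replace (- ln a * (2 * INR (nedges adj y)) / INR y)
    with (- (2 * INR (nedges adj y) / INR y) * ln a) by (field; assumption).
  apply Rle_refl.
Qed.

Lemma ZFprime_div_ZF_ge y t : (1 <= y)%nat -> 0 < t ->
  INR y / (1 + t) * Rpower (1 + t) (- avgdeg adj y) <= ZFprime adj y t / ZF adj y t.
Proof.
  intros Hy Ht.
  set (Z := ZF adj y t).
  assert (HZ : 1 <= Z) by (apply ZF_ge_1; lra).
  assert (Hocc : sumR (fun v => Zavoid adj y (v :: nbhd adj y v) t) (seq 0 y)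
                 <= ZFprime adj y t).
  { apply Rmult_le_reg_l with t; [exact Ht|].
    apply sum_Zavoid_closed_nbhd_le; lra. }
  assert (Hvert : Z / (1 + t) * sumR (fun v => Rpower (1 + t) (- INR (deg adj y v))) (seq 0 y)
                  <= sumR (fun v => Zavoid adj y (v :: nbhd adj y v) t) (seq 0 y)).
  { rewrite <- sumR_scal; apply sumR_le; intros v Hv; apply in_seq in Hv.
    apply Zavoid_closed_nbhd_ge; lra || lia. }
  pose proof (sum_Rpower_deg_ge y (1 + t) Hy) as Hjensen.
  apply Rmult_le_reg_l with Z; [lra|].
  replace (Z * (ZFprime adj y t / Z)) with (ZFprime adj y t) by (field; lra).
  replace (Z * (INR y / (1 + t) * Rpower (1 + t) (- avgdeg adj y)))
    with (Z / (1 + t) * (INR y * Rpower (1 + t) (- avgdeg adj y))) by (field; lra).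
  apply Rle_trans with (2 := Hocc), Rle_trans with (2 := Hvert).
  apply Rmult_le_compat_l; [apply Rdiv_le_0_compat; lra | exact Hjensen].
Qed.

End SimpleGraph.

Lemma increment_le_of_derive_le (f g f' g' : R -> R) b : 0 < b ->
  (forall c, 0 <= c <= b -> is_derive f c (f' c)) ->
  (forall c, 0 <= c <= b -> is_derive g c (g' c)) ->
  (forall c, 0 < c < b -> g' c <= f' c) -> g b - g 0 <= f b - f 0.
Proof.
  intros Hb Hf Hg Hfg.
  destruct (MVT_cor2 (fun x => f x - g x) (fun x => f' x - g' x) 0 b Hb) as [c [E Hc]].
  { intros c Hc; apply is_derive_Reals, (is_derive_minus f g); auto. }
  pose proof (Hfg c Hc); assert (0 <= (f' c - g' c) * (b - 0)) by (apply Rmult_le_pos; lra).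
  lra.
Qed.

Lemma ln_ZF_ge adj y (g g' : R -> R) lam : 0 < lam -> g 0 = 0 ->
  (forall c, 0 <= c <= lam -> is_derive g c (g' c)) ->
  (forall c, 0 < c < lam -> g' c <= ZFprime adj y c / ZF adj y c) ->
  g lam <= ln (ZF adj y lam).
Proof.
  intros Hlam Hg0 Hg Hg'.
  assert (HlnZ : forall c, 0 <= c ->
    is_derive (fun t => ln (ZF adj y t)) c (ZFprime adj y c / ZF adj y c)).
  { intros c Hc; pose proof (ZF_ge_1 adj y c Hc).
    apply is_derive_Reals.
    replace (ZFprime adj y c / ZF adj y c) with (/ ZF adj y c * ZFprime adj y c) by (field; lra).
    apply (derivable_pt_lim_comp (ZF adj y) ln); [apply ZF_derivable|].
    apply derivable_pt_lim_ln; lra. }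
  assert (Hln0 : 0 <= ln (ZF adj y 0)).
  { rewrite <- ln_1 at 1; apply ln_le; [lra|apply ZF_ge_1; lra]. }
  pose proof (increment_le_of_derive_le (fun t => ln (ZF adj y t)) g
                (fun c => ZFprime adj y c / ZF adj y c) g' lam Hlam) as H.
  assert (g lam - g 0 <= ln (ZF adj y lam) - ln (ZF adj y 0))
    by (apply H; [intros c Hc; apply HlnZ; lra | exact Hg | exact Hg']).
  lra.
Qed.

Theorem mainTheorem5 (y : nat) (adj : nat -> nat -> bool)
  (Hy : (1 <= y)%nat)
  (Hsym : forall i j, adj i j = adj j i)
  (Hirr : forall i, adj i i = false)
  (lam : R) (Hlam : 0 < lam) :
  derivable_pt_lim (ZF adj y) lam (ZFprime adj y lam) /\
  lam * ZFprime adj y lam / ZF adj y lam >=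
    lam / (1 + lam) * INR y * Rpower (1 + lam) (- avgdeg adj y) /\
  (avgdeg adj y = 0 -> ln (ZF adj y lam) >= INR y * ln (1 + lam)) /\
  (avgdeg adj y > 0 ->
     ln (ZF adj y lam) >=
       INR y / avgdeg adj y * (1 - Rpower (1 + lam) (- avgdeg adj y))).
Proof.
  pose proof (fun c => ZFprime_div_ZF_ge adj Hsym Hirr y c Hy) as Hratio.
  split; [apply ZF_derivable|]; split; [|split].
  - pose proof (Hratio lam Hlam); apply Rle_ge.
    replace (lam * ZFprime adj y lam / ZF adj y lam)
      with (lam * (ZFprime adj y lam / ZF adj y lam)) by (unfold Rdiv; ring).
    replace (lam / (1 + lam) * INR y * Rpower (1 + lam) (- avgdeg adj y))
      with (lam * (INR y / (1 + lam) * Rpower (1 + lam) (- avgdeg adj y))) by (unfold Rdiv; ring).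
    apply Rmult_le_compat_l; lra.
  - intros Hd; apply Rle_ge.
    apply (ln_ZF_ge adj y (fun t => INR y * ln (1 + t)) (fun c => INR y / (1 + c))); [exact Hlam| | |].
    + rewrite Rplus_0_r, ln_1; ring.
    + intros c Hc; auto_derive; [lra | field; lra].
    + intros c Hc; pose proof (Hratio c (proj1 Hc)) as H.
      rewrite Hd, Ropp_0, Rpower_O, Rmult_1_r in H by lra; exact H.
  - intros Hd; apply Rle_ge.
    apply (ln_ZF_ge adj y (fun t => INR y / avgdeg adj y * (1 - Rpower (1 + t) (- avgdeg adj y)))
             (fun c => INR y / (1 + c) * Rpower (1 + c) (- avgdeg adj y))); [exact Hlam| | |].
    + unfold Rpower; rewrite Rplus_0_r, ln_1, Rmult_0_r, exp_0; ring.
    + intros c Hc; unfold Rpower; auto_derive; [lra | field; lra].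
    + intros c Hc; apply Hratio; lra.
Qed.
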